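(* Let $A=\{a_s(n_s)\}_{s=1}^k$ and $B=\{b_t(m_t)\}_{t=1}^l$ be two finite systems of residue classes, where $n_s,m_t$ are positive integers and $a_s,b_t$ are integers with $0\leqslant a_s<n_s$ for $s=1,\ldots,k$ and $0\leqslant b_t<m_t$ for $t=1,\ldots,l$. Let $p$ be a prime with $p>|S(n_1,\ldots,n_k,m_1,\ldots,m_l)|$, and let $\zeta_p$ be a primitive $p$th root of unity. Then $A$ and $B$ are covering equivalent if and only if $$\sum_{s=1}^k\frac{\zeta_p^{a_s}}{1-\zeta_p^{n_s}}=\sum_{t=1}^l\frac{\zeta_p^{b_t}}{1-\zeta_p^{m_t}}.$$
   Context: For a positive integer $n$ and $a\in\{0,\ldots,n-1\}$, $a(n)$ denotes the residue class $\{x\in\mathbb Z: x\equiv a \pmod n\}$. For a finite system $A=\{a_s(n_s)\}_{s=1}^k$ of residue classes (repetitions allowed), its covering function is $w_A:\mathbb Z\to\{0,1,2,\ldots\}$, $w_A(x)=|\{1\leqslant s\leqslant k: x\equiv a_s \pmod{n_s}\}|$ (the covering function of the empty system is the zero function). Two finite systems $A,B$ are covering equivalent if $w_A(x)=w_B(x)$ for all $x\in\mathbb Z$. For positive integers $n_1,\ldots,n_k$, $S(n_1,\ldots,n_k)=\{r/n_s: r=0,\ldots,n_s-1;\ s=1,\ldots,k\}$, a set of rational numbers, and $|S(\cdot)|$ denotes its cardinality. *)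

From mathcomp Require Import all_boot all_order all_algebra all_field.
Set Implicit Arguments. Unset Strict Implicit. Unset Printing Implicit Defensive.
Import Order.TTheory GRing.Theory Num.Theory.

(* A finite system of residue classes {a_s(n_s)} is a list of pairs (a_s, n_s)
   (repetitions allowed). *)
Definition res_system := seq (nat * nat).

Definition wf_system (A : res_system) : Prop :=
  forall c, c \in A -> (0 < c.2)%N /\ (c.1 < c.2)%N.

Definition cover_fun (A : res_system) (x : int) : nat :=
  count (fun c : nat * nat => (x == (c.1 : int) %[mod (c.2 : int)])%Z) A.

Definition covering_equiv (A B : res_system) : Prop :=
  forall x : int, cover_fun A x = cover_fun B x.

Definition S_set (ns : seq nat) : seq rat :=
  undup (flatten [seq [seq (r%:R / n%:R : rat) | r <- iota 0 n] | n <- ns]).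

Definition card_S (ns : seq nat) : nat := size (S_set ns).

Local Open Scope ring_scope.
Definition zeta_sum (z : algC) (A : res_system) : algC :=
  \sum_(c <- A) z ^+ c.1 / (1 - z ^+ c.2).

From mathcomp Require Import all_boot all_order all_algebra all_field.
From mathcomp Require Import zify ring.
Set Implicit Arguments. Unset Strict Implicit. Unset Printing Implicit Defensive.
Import Order.TTheory GRing.Theory Num.Theory.
Local Open Scope ring_scope.

(* Let L = (p-1)!, a common multiple of the moduli (they are all < p) that p does
   not divide.  The covering function of A has period L, so it is recorded by the
   polynomial T_A = sum_s X^(a_s) (X^L - 1)/(X^(n_s) - 1), whose x-th coefficient is
   w_A(x) for x < L; hence A and B are covering equivalent iff T_A = T_B.  Evaluating
   at zeta gives T_A(zeta) = (1 - zeta^L) Z_A(zeta), where Z_A is the sum in the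
   theorem.  Conversely, let M be the polynomial whose roots are the exp(2 pi i r/n_s)
   for r/n_s in S; it is a multiple of every X^(n_s) - 1, divides X^L - 1 and has
   degree at most |S| < p.  Then T_A = (X^L - 1)/M * H_A with
   H_A = sum_s X^(a_s) M/(X^(n_s) - 1) of degree < p - 1, and
   H_A(zeta^k) = -M(zeta^k) Z_A(zeta^k).  Since the automorphisms of algC act
   transitively on the primitive p-th roots of unity, Z_A(zeta) = Z_B(zeta) forces
   H_A - H_B to vanish at the p - 1 points zeta^k, so H_A = H_B. *)

Lemma subset_catl {T : eqType} {s1 s2 : seq T} : {subset s1 <= s1 ++ s2}.
Proof. by move=> x xs1; rewrite mem_cat xs1. Qed.

Lemma subset_catr {T : eqType} {s1 s2 : seq T} : {subset s2 <= s1 ++ s2}.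
Proof. by move=> x xs2; rewrite mem_cat xs2 orbT. Qed.

Section PeriodPoly.
Variable R : comNzRingType.

Definition period_poly (L n : nat) : {poly R} := \sum_(j < L %/ n) 'X^(j * n).

Lemma period_poly_mul (L n : nat) : (n %| L)%N ->
  ('X^n - 1) * period_poly L n = 'X^L - 1.
Proof.
move=> dvd_nL; rewrite -{2}(divnK dvd_nL) /period_poly; elim: (L %/ n)%N => [|q IHq].
  by rewrite big_ord0 mulr0 mul0n expr0 subrr.
by rewrite big_ord_recr /= mulrDr IHq mulrBl -exprD mul1r mulSn addnC; ring.
Qed.

Lemma eqn_add_mul_divmod (x a n j : nat) : (a < n)%N ->
  (x == a + j * n)%N = (x %% n == a)%N && (x %/ n == j)%N.
Proof.
move=> lt_an; have n_gt0 : (0 < n)%N by apply: leq_ltn_trans lt_an.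
apply/eqP/andP => [->|[/eqP <- /eqP <-]]; last by rewrite addnC -divn_eq.
by rewrite addnC modnMDl divnMDl // modn_small // divn_small // addn0.
Qed.

Lemma coef_XnM_period_poly (L n a x : nat) : (a < n)%N -> (n %| L)%N ->
  ('X^a * period_poly L n)`_x = ((x < L) && (x %% n == a))%N%:R.
Proof.
move=> lt_an dvd_nL; have n_gt0 : (0 < n)%N by apply: leq_ltn_trans lt_an.
rewrite /period_poly mulr_sumr coef_sum.
under eq_bigr do rewrite -exprD coefXn eqn_add_mul_divmod //.
have [x_n|] := boolP (x %% n == a)%N; last by move=> /negPf x_n; rewrite andbF big1.
have lt_xL : (x %/ n < L %/ n)%N = (x < L)%N by rewrite ltn_divLR // divnK.
case: (ltnP x L) => [lt_xLn|le_Lx].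
  rewrite -lt_xL in lt_xLn; rewrite (bigD1 (Ordinal lt_xLn)) //= eqxx big1 ?addr0 //.
  by move=> j /eqP ne_j; case: eqP => // xj; case: ne_j; apply: val_inj.
rewrite big1 // => j _; case: eqP => // xj; move: (ltn_ord j).
by rewrite -xj lt_xL ltnNge le_Lx.
Qed.

End PeriodPoly.

Lemma period_polyE (F : fieldType) (L n : nat) : (0 < n)%N -> (n %| L)%N ->
  period_poly F L n = ('X^L - 1) %/ ('X^n - 1).
Proof.
move=> n_gt0 dvd_nL.
by rewrite -(@period_poly_mul F _ _ dvd_nL) mulKp // monic_neq0 ?monicXnsubC.
Qed.

Lemma dvdp_Xn_sub1 (F : fieldType) (L n : nat) : (n %| L)%N ->
  ('X^n - 1 : {poly F}) %| 'X^L - 1.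
Proof. by move=> dvd_nL; rewrite -(@period_poly_mul F _ _ dvd_nL) dvdp_mulIl. Qed.

Definition cover_poly (L : nat) (A : res_system) : {poly algC} :=
  \sum_(c <- A) 'X^(c.1) * period_poly algC L c.2.

Lemma cover_fun_nat (A : res_system) (x : nat) : wf_system A ->
  cover_fun A x = count (fun c : nat * nat => x %% c.2 == c.1)%N A.
Proof.
move=> wfA; apply: eq_in_count => c /wfA [_ lt_c] /=.
by rewrite !modz_nat eqz_nat (modn_small lt_c).
Qed.

Lemma cover_fun_modz (A : res_system) (L : nat) (x : int) :
  (forall c, c \in A -> (c.2 %| L)%N) -> cover_fun A x = cover_fun A (x %% L)%Z.
Proof.
move=> dvdA; apply: eq_in_count => c /dvdA /dvdnP [q ->] /=.
by rewrite {1}(divz_eq x (q * c.2)%N) PoszM mulrA modzMDl.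
Qed.

Lemma coef_cover_poly (L : nat) (A : res_system) (x : nat) : wf_system A ->
  (forall c, c \in A -> (c.2 %| L)%N) ->
  (cover_poly L A)`_x = (if (x < L)%N then cover_fun A x else 0%N)%:R.
Proof.
move=> wfA dvdA; rewrite cover_fun_nat //; elim: A wfA dvdA => [|c A IHA] wfA dvdA.
  by rewrite /cover_poly big_nil coef0; case: ifP.
have [_ lt_c] := wfA c (mem_head _ _).
have wfA' : wf_system A by move=> d dA; apply: wfA; rewrite inE dA orbT.
rewrite /cover_poly big_cons coefD coef_XnM_period_poly ?dvdA ?mem_head //.
rewrite [X in _ + X]IHA // => [|d dA]; last by apply: dvdA; rewrite inE dA orbT.
by case: (x < L)%N; rewrite ?addr0 //= natrD.
Qed.

Lemma covering_equiv_cover_poly (A B : res_system) (L : nat) :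
  wf_system A -> wf_system B -> (0 < L)%N -> (forall c, c \in A ++ B -> (c.2 %| L)%N) ->
  covering_equiv A B <-> cover_poly L A = cover_poly L B.
Proof.
move=> wfA wfB L_gt0 dvdL.
have dvdA c : c \in A -> (c.2 %| L)%N by move=> cA; apply/dvdL/subset_catl.
have dvdB c : c \in B -> (c.2 %| L)%N by move=> cB; apply/dvdL/subset_catr.
split=> [eqAB | eqT x].
  by apply/polyP => x; rewrite !coef_cover_poly // eqAB.
rewrite (cover_fun_modz x dvdA) (cover_fun_modz x dvdB).
have L_neq0 : L%:Z != 0 by rewrite eqz_nat -lt0n.
have [y x_mod] : exists y : nat, (x %% L)%Z = y.
  by exists `|(x %% L)%Z|%N; rewrite gez0_abs // modz_ge0.
have lt_yL : (y < L)%N by rewrite -ltz_nat -x_mod ltz_pmod // ltz_nat.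
have /polyP/(_ y) := eqT; rewrite x_mod !coef_cover_poly // lt_yL.
by move/eqP; rewrite eqr_nat => /eqP.
Qed.

Definition reduced_cover_poly (M : {poly algC}) (A : res_system) : {poly algC} :=
  \sum_(c <- A) 'X^(c.1) * (M %/ ('X^(c.2) - 1)).

Lemma reduced_cover_poly_Xn_sub1 (L : nat) (A : res_system) : wf_system A ->
  (forall c, c \in A -> (c.2 %| L)%N) -> reduced_cover_poly ('X^L - 1) A = cover_poly L A.
Proof.
move=> wfA dvdA; apply: eq_big_seq => c cA.
by have [c_gt0 _] := wfA c cA; rewrite period_polyE ?dvdA.
Qed.

Lemma divp_mul_divp (F : fieldType) (d M N : {poly F}) : d != 0 ->
  d %| M -> M %| N -> (N %/ M) * (M %/ d) = N %/ d.
Proof.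
move=> d_neq0 dvd_dM dvd_MN; apply: (mulIf d_neq0).
by rewrite -mulrA !divpK //; apply: dvdp_trans dvd_MN.
Qed.

Lemma horner_reduced_cover_poly (M : {poly algC}) (A : res_system) (y : algC) :
  (forall c, c \in A -> ('X^(c.2) - 1) %| M) -> (forall c, c \in A -> y ^+ c.2 != 1) ->
  (reduced_cover_poly M A).[y] = - M.[y] * zeta_sum y A.
Proof.
move=> dvdA yA; rewrite horner_sum /zeta_sum mulr_sumr; apply: eq_big_seq => c cA.
have /(congr1 (horner^~ y)) := divpK (dvdA c cA).
rewrite /= hornerM !hornerE => <-.
have yc_neq0 : y ^+ c.2 - 1 != 0 by rewrite subr_eq0 yA.
by rewrite /= -[1 - _]opprB invrN mulNr mulrNN mulrAC mulfK // mulrC.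
Qed.

Lemma horner_cover_poly (L : nat) (A : res_system) (y : algC) : wf_system A ->
  (forall c, c \in A -> (c.2 %| L)%N) -> (forall c, c \in A -> y ^+ c.2 != 1) ->
  (cover_poly L A).[y] = (1 - y ^+ L) * zeta_sum y A.
Proof.
move=> wfA dvdA yA; rewrite -reduced_cover_poly_Xn_sub1 // horner_reduced_cover_poly //.
  by rewrite !hornerE opprB.
by move=> c cA; apply: dvdp_Xn_sub1; apply: dvdA.
Qed.

Lemma cover_poly_factor (L : nat) (A : res_system) (M : {poly algC}) :
  wf_system A -> (forall c, c \in A -> (c.2 %| L)%N) ->
  (forall c, c \in A -> ('X^(c.2) - 1) %| M) -> M %| 'X^L - 1 ->
  ('X^L - 1) %/ M * reduced_cover_poly M A = cover_poly L A.
Proof.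
move=> wfA dvdA dvdMA dvd_ML; rewrite -reduced_cover_poly_Xn_sub1 // mulr_sumr.
apply: eq_big_seq => c cA; have [c_gt0 _] := wfA c cA.
by rewrite mulrCA divp_mul_divp ?dvdMA // monic_neq0 ?monicXnsubC.
Qed.

Lemma size_reduced_cover_poly (M : {poly algC}) (A : res_system) : M != 0 ->
  wf_system A -> (forall c, c \in A -> ('X^(c.2) - 1) %| M) ->
  (size (reduced_cover_poly M A) <= (size M).-1)%N.
Proof.
move=> M_neq0 wfA dvdA; rewrite /reduced_cover_poly big_seq.
apply: (big_ind (fun q : {poly algC} => size q <= (size M).-1)%N).
- by rewrite size_poly0.
- by move=> q r q_le r_le; apply: leq_trans (size_polyD _ _) _; rewrite geq_max q_le r_le.
move=> [a n] cA; have [/= n_gt0 lt_an] := wfA _ cA.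
have size_Xn : size ('X^n - 1 : {poly algC}) = n.+1 by rewrite size_XnsubC.
have := dvdp_leq M_neq0 (dvdA _ cA); rewrite /= size_Xn => lt_nM.
apply: leq_trans (size_polyMleq _ _) _.
rewrite size_polyXn size_divp -?size_poly_gt0 ?size_Xn //=; move: (size M) lt_nM => m; lia.
Qed.

Lemma rmorph_zeta_sum (u : {rmorphism algC -> algC}) (z : algC) (A : res_system) :
  u (zeta_sum z A) = zeta_sum (u z) A.
Proof.
rewrite rmorph_sum; apply: eq_bigr => c _.
by rewrite fmorph_div rmorphB rmorph1 !rmorphXn.
Qed.

Lemma zeta_sum_prim_root_exp (A B : res_system) (p k : nat) (z : algC) :
  p.-primitive_root z -> coprime k p ->
  zeta_sum z A = zeta_sum z B -> zeta_sum (z ^+ k) A = zeta_sum (z ^+ k) B.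
Proof.
move=> z_prim co_kp eqAB; have [u uz] := Qn_aut_exists co_kp.
by rewrite -(uz z (prim_expr_order z_prim)) -!rmorph_zeta_sum eqAB.
Qed.

Lemma poly_prim_roots_eq0 (R : idomainType) (n : nat) (z : R) (Q : {poly R}) :
  n.-primitive_root z -> (size Q < n)%N ->
  (forall k, (0 < k < n)%N -> root Q (z ^+ k)) -> Q = 0.
Proof.
move=> z_prim size_Q rootQ; apply/eqP/contraT => Q_neq0.
have n_gt0 := prim_order_gt0 z_prim.
have roots_uniq : uniq [seq z ^+ k | k <- iota 1 n.-1].
  rewrite map_inj_in_uniq ?iota_uniq // => i j; rewrite !mem_iota => ri rj /eqP.
  by rewrite (eq_prim_root_expr z_prim) !modn_small => [/eqP| |]; lia.
have roots_all : all (root Q) [seq z ^+ k | k <- iota 1 n.-1].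
  apply/allP => y /mapP [k]; rewrite mem_iota => rk ->; apply: rootQ; lia.
have := max_poly_roots Q_neq0 roots_all roots_uniq.
by rewrite size_map size_iota; lia.
Qed.

Lemma prim_root_expn_neq1 (R : nzRingType) (p n : nat) (z : R) :
  p.-primitive_root z -> ~~ (p %| n)%N -> z ^+ n != 1.
Proof. by move=> z_prim; rewrite (prim_order_dvd z_prim). Qed.

Lemma reduced_cover_poly_eq (A B : res_system) (p : nat) (zeta : algC) (M : {poly algC}) :
  wf_system A -> wf_system B -> prime p -> p.-primitive_root zeta ->
  (forall c, c \in A ++ B -> ~~ (p %| c.2)%N) ->
  M != 0 -> (size M <= p)%N -> (forall c, c \in A ++ B -> ('X^(c.2) - 1) %| M) ->
  zeta_sum zeta A = zeta_sum zeta B -> reduced_cover_poly M A = reduced_cover_poly M B.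
Proof.
move=> wfA wfB p_pr zeta_prim ndvd_p M_neq0 size_M dvdM eqAB.
have size_lt X : wf_system X -> {subset X <= A ++ B} ->
    (size (reduced_cover_poly M X) < p)%N.
  move=> wfX subX; apply: leq_ltn_trans (size_reduced_cover_poly M_neq0 wfX _) _.
    by move=> c /subX /dvdM.
  by move: size_M (prime_gt0 p_pr); lia.
apply/eqP; rewrite -subr_eq0; apply/eqP; apply: (poly_prim_roots_eq0 zeta_prim).
  apply: leq_ltn_trans (size_polyD _ _) _.
  by rewrite size_polyN gtn_max !size_lt // => [c /subset_catr|c /subset_catl].
move=> k /andP [k_gt0 lt_kp].
have co_kp : coprime k p by rewrite coprime_sym prime_coprime // gtnNdvd.
have zk_prim : p.-primitive_root (zeta ^+ k) by rewrite prim_root_exp_coprime.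
have hornerE X : {subset X <= A ++ B} ->
    (reduced_cover_poly M X).[zeta ^+ k] = - M.[zeta ^+ k] * zeta_sum (zeta ^+ k) X.
  move=> subX; apply: horner_reduced_cover_poly => c /subX cAB; first exact: dvdM.
  exact: prim_root_expn_neq1 zk_prim (ndvd_p c cAB).
rewrite /root hornerD hornerN (hornerE A subset_catl) (hornerE B subset_catr).
by rewrite (zeta_sum_prim_root_exp zeta_prim co_kp eqAB) subrr.
Qed.

Lemma mem_S_set (ns : seq nat) (n r : nat) : n \in ns -> (r < n)%N ->
  (r%:R / n%:R : rat) \in S_set ns.
Proof.
move=> n_ns lt_rn; rewrite /S_set mem_undup; apply/flatten_mapP; exists n => //.
by apply/mapP; exists r; rewrite ?mem_iota.
Qed.

Lemma leq_card_S (ns : seq nat) (n : nat) : n \in ns -> (n <= card_S ns)%N.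
Proof.
move=> n_ns; rewrite -[X in (X <= _)%N](size_iota 0).
rewrite -(size_map (fun r => r%:R / n%:R : rat)).
apply: uniq_leq_size => [|q /mapP [r]]; last first.
  by rewrite mem_iota => /andP [_ lt_rn] ->; apply: mem_S_set.
case: (posnP n) => [-> //|n_gt0].
have n_neq0 : (n%:R : rat) != 0 by rewrite pnatr_eq0 -lt0n.
rewrite map_inj_in_uniq ?iota_uniq // => i j _ _ /(divIf n_neq0) /eqP.
by rewrite eqr_nat => /eqP.
Qed.

(* M is the product of the X - z^(q L), q in S, for a primitive L-th root of unity z;
   the roots of X^n - 1 are the z^((r/n) L) for r < n. *)
Lemma exists_common_multiple_Xn_sub1 (ns : seq nat) (L : nat) : (0 < L)%N ->
  (forall n, n \in ns -> (0 < n)%N /\ (n %| L)%N) ->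
  exists M : {poly algC}, [/\ M != 0, (size M <= (card_S ns).+1)%N,
    (forall n, n \in ns -> ('X^n - 1) %| M) & M %| 'X^L - 1].
Proof.
move=> L_gt0 ns_dvdL; have [z z_prim] := C_prim_root_exists L_gt0.
pose root_of (q : rat) := z ^+ `|numq (q * L%:R)|%N.
pose rs := undup [seq root_of q | q <- S_set ns].
exists (\prod_(e <- rs) ('X - e%:P)); split.
- exact/monic_neq0/monic_prod_XsubC.
- by rewrite size_prod_XsubC ltnS (leq_trans (size_undup _)) ?size_map.
- move=> n n_ns; have [n_gt0 dvd_nL] := ns_dvdL n n_ns.
  have zn_prim := dvdn_prim_root z_prim dvd_nL.
  rewrite -(@polyC1 algC) -(factor_Xn_sub_1 zn_prim) -(big_map _ xpredT (fun e => 'X - e%:P)).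
  apply: uniq_roots_dvdp; last first.
    rewrite uniq_rootsE map_inj_in_uniq ?iota_uniq // => i j.
    rewrite !mem_index_iota => /andP [_ lt_in] /andP [_ lt_jn] /eqP.
    by rewrite (eq_prim_root_expr zn_prim) !modn_small // => /eqP.
  apply/allP => y /mapP [r]; rewrite mem_index_iota => /andP [_ lt_rn] ->.
  rewrite root_prod_XsubC mem_undup; apply/mapP.
  exists (r%:R / n%:R); rewrite ?mem_S_set // /root_of.
  have n_neq0 : (n%:R : rat) != 0 by rewrite pnatr_eq0 -lt0n.
  have -> : (r%:R / n%:R * L%:R : rat) = (r * (L %/ n))%N%:R.
    by rewrite -{1}(divnK dvd_nL) !natrM; field.
  by rewrite pmulrn numq_int absz_nat mulnC exprM.
- apply: uniq_roots_dvdp; last by rewrite uniq_rootsE undup_uniq.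
  apply/allP => e; rewrite mem_undup => /mapP [q _ ->].
  by rewrite /root !hornerE /root_of -exprM mulnC exprM (prim_expr_order z_prim) expr1n subrr.
Qed.

Lemma prime_ndvd_fact_pred (p : nat) : prime p -> ~~ (p %| (p.-1)`!)%N.
Proof.
move=> p_pr; rewrite -prime_coprime //; apply: coprime_dvdl (coprimeSn _).
by rewrite -Wilson ?prime_gt1.
Qed.

Lemma zeta_sum_eq_of_cover_poly_eq (A B : res_system) (L p : nat) (zeta : algC) :
  wf_system A -> wf_system B -> p.-primitive_root zeta -> ~~ (p %| L)%N ->
  (forall c, c \in A ++ B -> (c.2 %| L)%N) ->
  cover_poly L A = cover_poly L B -> zeta_sum zeta A = zeta_sum zeta B.
Proof.
move=> wfA wfB zeta_prim ndvd_pL dvdL eqAB.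
have hornerE X : wf_system X -> {subset X <= A ++ B} ->
    (cover_poly L X).[zeta] = (1 - zeta ^+ L) * zeta_sum zeta X.
  move=> wfX subX; apply: horner_cover_poly => // c /subX /dvdL // dvd_cL.
  by apply: (prim_root_expn_neq1 zeta_prim); apply: contra ndvd_pL => /dvdn_trans; apply.
have zetaL_neq0 : 1 - zeta ^+ L != 0.
  by rewrite subr_eq0 eq_sym (prim_root_expn_neq1 zeta_prim).
apply: (mulfI zetaL_neq0).
by rewrite -(hornerE A wfA subset_catl) eqAB (hornerE B wfB subset_catr).
Qed.

Lemma cover_poly_eq_of_zeta_sum_eq (A B : res_system) (L p : nat) (zeta : algC)
    (M : {poly algC}) :
  wf_system A -> wf_system B -> prime p -> p.-primitive_root zeta ->
  (forall c, c \in A ++ B -> (c.2 %| L)%N /\ ~~ (p %| c.2)%N) ->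
  M != 0 -> (size M <= p)%N -> (forall c, c \in A ++ B -> ('X^(c.2) - 1) %| M) ->
  M %| 'X^L - 1 ->
  zeta_sum zeta A = zeta_sum zeta B -> cover_poly L A = cover_poly L B.
Proof.
move=> wfA wfB p_pr zeta_prim modAB M_neq0 size_M dvdM dvd_ML eqAB.
have factorE X : wf_system X -> {subset X <= A ++ B} ->
    ('X^L - 1) %/ M * reduced_cover_poly M X = cover_poly L X.
  move=> wfX subX; apply: cover_poly_factor => // c /subX cAB; last exact: dvdM.
  by case: (modAB c cAB).
rewrite -(factorE A wfA subset_catl) -(factorE B wfB subset_catr).
rewrite (reduced_cover_poly_eq wfA wfB p_pr zeta_prim _ M_neq0 size_M dvdM eqAB) //.
by move=> c /modAB [].
Qed.

Theorem theorem1p1 (A B : res_system) (p : nat) (zeta : algC) :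
  wf_system A -> wf_system B ->
  prime p ->
  (card_S ([seq c.2 | c <- A] ++ [seq c.2 | c <- B]) < p)%N ->
  (p.-primitive_root zeta)%R ->
  covering_equiv A B <-> zeta_sum zeta A = zeta_sum zeta B.
Proof.
move=> wfA wfB p_pr lt_Sp zeta_prim.
set ns := _ ++ _ in lt_Sp.
have ns_bounds n : n \in ns -> (0 < n < p)%N.
  move=> n_ns; rewrite (leq_ltn_trans (leq_card_S n_ns)) // andbT.
  by move: n_ns; rewrite mem_cat => /orP [] /mapP [c cX ->]; [case: (wfA c cX) | case: (wfB c cX)].
pose L := (p.-1)`!.
have ns_dvdL n : n \in ns -> (0 < n)%N /\ (n %| L)%N.
  move=> /ns_bounds /andP [n_gt0 lt_np]; split=> //.
  by rewrite dvdn_fact // n_gt0 -ltnS prednK ?prime_gt0.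
have mod_ns c : c \in A ++ B -> c.2 \in ns.
  by rewrite /ns !mem_cat => /orP [] cX; apply/orP; [left | right]; apply: map_f.
have dvdL c : c \in A ++ B -> (c.2 %| L)%N by move=> /mod_ns /ns_dvdL [].
rewrite (covering_equiv_cover_poly wfA wfB (fact_gt0 _) dvdL); split.
  exact/(zeta_sum_eq_of_cover_poly_eq wfA wfB zeta_prim (prime_ndvd_fact_pred p_pr) dvdL).
have [M [M_neq0 size_M dvdM dvd_ML]] := exists_common_multiple_Xn_sub1 (fact_gt0 _) ns_dvdL.
apply: cover_poly_eq_of_zeta_sum_eq wfA wfB p_pr zeta_prim _ M_neq0 _ _ dvd_ML.
- by move=> c cAB; rewrite dvdL // gtnNdvd //; case/andP: (ns_bounds _ (mod_ns c cAB)).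
- exact: leq_trans size_M lt_Sp.
- by move=> c /mod_ns /dvdM.
Qed.
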